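(* There exists a constant $c>0$ such that for every integer $k\geq 2$ and every graph $G$ with $\operatorname{pw}(G)\geq ck^5\log^{5/2}(k)$, we have $\operatorname{pw}(G\times K_2)\geq k$.
   Context: $\operatorname{pw}$ denotes pathwidth. The direct product $G \times H$ has vertex set $V(G)\times V(H)$, with $(a,v)(b,u)$ an edge iff $ab\in E(G)$ and $uv\in E(H)$; $K_2$ is the graph with two adjacent vertices. *)

From Stdlib Require Import ClassicalEpsilon.
From mathcomp Require Import all_boot.
Set Implicit Arguments. Unset Strict Implicit. Unset Printing Implicit Defensive.

Definition is_path_decomp (T : finType) (e : rel T) (s : seq {set T}) : Prop :=
  [/\ (forall v : T, exists2 B, B \in s & v \in B),
      (forall u v : T, e u v -> exists2 B, B \in s & (u \in B) && (v \in B)) &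
      (forall (v : T) (i j l : nat), i <= j -> j <= l ->
         v \in nth set0 s i -> v \in nth set0 s l -> v \in nth set0 s j)].

Definition width_le (T : finType) (s : seq {set T}) (w : nat) : Prop :=
  forall B, B \in s -> #|B| <= w.+1.

Definition has_pw_le (T : finType) (e : rel T) (w : nat) : Prop :=
  exists s, is_path_decomp e s /\ width_le s w.

Definition has_pw_leb (T : finType) (e : rel T) (w : nat) : bool :=
  if excluded_middle_informative (has_pw_le e w) then true else false.

Lemma has_pw_le_full (T : finType) (e : rel T) : has_pw_le e #|T|.
Proof.
exists [:: setT]; split; last by move=> B; rewrite inE => /eqP ->; rewrite cardsT.
split.
- by move=> v; exists setT; rewrite ?inE.
- by move=> u v _; exists setT; rewrite ?inE.
- move=> v i j l _ Hjl _ Hl.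
  case: l Hjl Hl => [|l]; last by rewrite /= nth_nil inE.
  by case: j.
Qed.

Lemma has_pw_leb_ex (T : finType) (e : rel T) : exists w, has_pw_leb e w.
Proof.
exists #|T|; rewrite /has_pw_leb.
case: excluded_middle_informative => // H.
by case: (H (has_pw_le_full e)).
Qed.

Definition pw (T : finType) (e : rel T) : nat := ex_minn (has_pw_leb_ex e).

Definition dprodK2 (T : finType) (e : rel T) : rel (T * bool)%type :=
  fun p q => e p.1 q.1 && (p.2 != q.2).

(* A path decomposition of G x K_2 contracts to one of G of no larger width.
   Let first_bag u be the first bag containing a copy (u, a) of u, and let
   the interval of u run from first_bag u to the largest first_bag v over
   neighbours v.  For an edge uv, the edge (u, a)(v, ~~ a) of G x K_2 lies in
   a bag at or after first_bag v, so the copy (u, a) persists up to there and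
   every bag of the interval of u still contains a copy of u.  Contracted bags
   therefore inject into the original ones, whence pw G <= pw (G x K_2); the
   polylogarithmic threshold of the theorem is then at least k. *)
From mathcomp Require Import all_boot.
From Stdlib Require Import ClassicalEpsilon Reals Lra.

Set Implicit Arguments.
Unset Strict Implicit.
Unset Printing Implicit Defensive.

Lemma pw_spec (T : finType) (e : rel T) : has_pw_le e (pw e).
Proof.
rewrite /pw; case: ex_minnP => w + _.
by rewrite /has_pw_leb; case: excluded_middle_informative.
Qed.

Lemma pw_min (T : finType) (e : rel T) w : has_pw_le e w -> pw e <= w.
Proof.
move=> Hw; rewrite /pw; case: ex_minnP => m _; apply.
by rewrite /has_pw_leb; case: excluded_middle_informative.
Qed.

Section ContractDecomposition.

Variables (T : finType) (e : rel T) (s : seq {set T * bool}).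
Hypothesis decomp_s : is_path_decomp (dprodK2 e) s.

Definition has_copy (u : T) (B : {set T * bool}) :=
  ((u, false) \in B) || ((u, true) \in B).

Definition first_bag (u : T) := find (has_copy u) s.

Definition last_bag (u : T) :=
  maxn (first_bag u) (\max_(v | e u v || e v u) first_bag v).

Definition contract_bag (t : nat) := [set u | first_bag u <= t <= last_bag u].

Lemma has_copy_bags u : has (has_copy u) s.
Proof.
case: decomp_s => cover _ _; case: (cover (u, false)) => B Bs uB.
by apply/hasP; exists B; rewrite // /has_copy uB.
Qed.

Lemma first_bag_lt u : first_bag u < size s.
Proof. by rewrite -has_find has_copy_bags. Qed.

Lemma first_bag_le_index u B : B \in s -> has_copy u B -> first_bag u <= index B s.
Proof.
move=> Bs uB; rewrite leqNgt; apply/negP => /(before_find set0).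
by rewrite nth_index // uB.
Qed.

Lemma copy_persists u v t : e u v || e v u -> first_bag u <= t <= first_bag v ->
  has_copy u (nth set0 s t).
Proof.
move=> uv /andP [ut tv]; case: decomp_s => _ edge_bag interval.
have [a ua] : exists a, (u, a) \in nth set0 s (first_bag u).
  by case/orP: (nth_find set0 (has_copy_bags u)) => ?; [exists false|exists true].
have [B Bs /andP [uaB vaB]] :
    exists2 B, B \in s & ((u, a) \in B) && ((v, ~~ a) \in B).
  case/orP: uv => uv; first by apply: edge_bag; rewrite /dprodK2 /= uv; case: (a).
  have [B Bs /andP [? ?]] : exists2 B, B \in s & ((v, ~~ a) \in B) && ((u, a) \in B).
    by apply: edge_bag; rewrite /dprodK2 /= uv; case: (a).
  by exists B; rewrite // andbC; apply/andP.
have vB : first_bag v <= index B s.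
  by apply: first_bag_le_index; rewrite // /has_copy; case: (a) vaB => ->; rewrite ?orbT.
have : (u, a) \in nth set0 s t.
  by apply: (interval _ (first_bag u) t (index B s)); rewrite ?nth_index // (leq_trans tv).
by rewrite /has_copy; case: a {ua uaB vaB} => ->; rewrite ?orbT.
Qed.

Lemma late_neighbour u t : first_bag u < t -> t <= last_bag u ->
  exists2 v, e u v || e v u & t <= first_bag v.
Proof.
move=> ut; rewrite leq_max leqNgt ut /=.
case: (pickP (fun v => e u v || e v u)) => [v0 uv0|no_nbr]; last first.
  by rewrite big_pred0 // leqn0 => /eqP t0; move: ut; rewrite t0.
rewrite (bigmax_eq_arg v0) //; case: arg_maxnP => // v uv _ tv.
by exists v.
Qed.

Lemma copy_in_contract_bag u t : u \in contract_bag t -> has_copy u (nth set0 s t).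
Proof.
rewrite inE => /andP [ut tu]; case: (ltngtP (first_bag u) t) ut => // [ut _|<- _].
  have [v uv tv] := late_neighbour ut tu.
  by apply: (copy_persists uv); rewrite (ltnW ut).
exact: nth_find (has_copy_bags u).
Qed.

Lemma contract_is_path_decomp : is_path_decomp e (mkseq contract_bag (size s)).
Proof.
have bag_in t : t < size s -> contract_bag t \in mkseq contract_bag (size s).
  by move=> ts; apply/mapP; exists t; rewrite ?mem_iota.
have nbr_last u v : e u v || e v u -> first_bag v <= last_bag u.
  by move=> uv; rewrite (leq_trans _ (leq_maxr _ _)) // (leq_bigmax_cond v uv).
split.
- move=> u; exists (contract_bag (first_bag u)); first exact/bag_in/first_bag_lt.
  by rewrite inE leqnn leq_maxl.
- move=> u v uv; case: (leqP (first_bag u) (first_bag v)) => uv_order.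
    exists (contract_bag (first_bag v)); first exact/bag_in/first_bag_lt.
    by rewrite !inE uv_order leqnn leq_maxl nbr_last ?uv.
  exists (contract_bag (first_bag u)); first exact/bag_in/first_bag_lt.
  by rewrite !inE (ltnW uv_order) leqnn leq_maxl nbr_last ?uv ?orbT.
- move=> u i j l ij jl.
  case: (ltnP l (size s)) => ls; last by rewrite [nth _ _ l]nth_default ?size_mkseq ?inE.
  rewrite !nth_mkseq ?(leq_ltn_trans _ ls) ?(leq_trans ij) // !inE.
  by case/andP=> ui _ /andP [_ lu]; rewrite (leq_trans ui ij) (leq_trans jl lu).
Qed.

Lemma contract_width w : width_le s w -> width_le (mkseq contract_bag (size s)) w.
Proof.
move=> width_s B /mapP [t]; rewrite mem_iota add0n => /andP [_ ts] ->.
pose copy u := (u, ~~ ((u, false) \in nth set0 s t)).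
have copy_inj : injective copy by move=> x y [].
rewrite -(card_imset _ copy_inj); apply: leq_trans (width_s _ (mem_nth set0 ts)).
apply/subset_leq_card/subsetP => _ /imsetP [u /copy_in_contract_bag uB ->].
by move: uB; rewrite /copy /has_copy; case: ((u, false) \in _) / idP.
Qed.

End ContractDecomposition.

Lemma pw_le_dprodK2 (T : finType) (e : rel T) : pw e <= pw (dprodK2 e).
Proof.
have [s [decomp_s width_s]] := pw_spec (dprodK2 e).
apply: pw_min; exists (mkseq (contract_bag e s) (size s)).
by split; [exact: contract_is_path_decomp | exact: contract_width].
Qed.

Open Scope R_scope.

Lemma le_polylog_threshold (x : R) : 2 <= x ->
  x <= / Rpower (ln 2) (5 / 2) * x ^ 5 * Rpower (ln x) (5 / 2).
Proof.
move=> x2.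
have ln2_pos : 0 < ln 2 by have := ln_lt_2; lra.
have ln2_pow_pos : 0 < Rpower (ln 2) (5 / 2) by apply: exp_pos.
have ln_ratio : 1 <= / Rpower (ln 2) (5 / 2) * Rpower (ln x) (5 / 2).
  rewrite -(Rinv_l (Rpower (ln 2) (5 / 2))); last by lra.
  apply: Rmult_le_compat_l; first by apply/Rlt_le/Rinv_0_lt_compat.
  have ln_mono : ln 2 <= ln x.
    by case: (Rle_lt_or_eq_dec _ _ x2) => [lt2x|<-]; [apply/Rlt_le/ln_increasing | ]; lra.
  by apply: Rle_Rpower_l; lra.
have x_le_pow : x <= x ^ 5 by rewrite -{1}(pow_1 x); apply: Rle_pow; [lra | apply/leP].
have : x ^ 5 * 1 <= x ^ 5 * (/ Rpower (ln 2) (5 / 2) * Rpower (ln x) (5 / 2)).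
  by apply: Rmult_le_compat_l; [apply: pow_le; lra | ].
lra.
Qed.

Theorem mainTheorem16 :
  exists c : R, 0 < c /\
    forall (k : nat), (2 <= k)%nat ->
    forall (T : finType) (e : rel T), symmetric e -> irreflexive e ->
      c * INR k ^ 5 * Rpower (ln (INR k)) (5 / 2) <= INR (pw e) ->
      (k <= pw (dprodK2 e))%nat.
Proof.
exists (/ Rpower (ln 2) (5 / 2)); split.
  by apply/Rinv_0_lt_compat/exp_pos.
move=> k k2 T e _ _ pw_large.
apply: leq_trans (pw_le_dprodK2 e).
apply/leP/INR_le/(Rle_trans _ _ _ _ pw_large)/le_polylog_threshold.
by have := le_INR 2 k (elimT leP k2); rewrite /= /INR.
Qed.
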